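(* Under the standing assumptions below, suppose there exists $m_1\in M$ such that $\phi\left(\left[\begin{smallmatrix} 1 & m_1\\ 0 & 0\end{smallmatrix}\right]\right)$ is a type 2 idempotent of $T'$. Then (a) $\phi$ maps every idempotent of the form $\left[\begin{smallmatrix} 1 & m\\ 0 & 0\end{smallmatrix}\right]$ ($m\in M$) to a type 2 idempotent; and (b) there exist a fixed element $a'_2\in M'$ and a map $v_2:M\to N'$ such that $\phi\left(\left[\begin{smallmatrix} 1 & m\\ 0 & 0\end{smallmatrix}\right]\right)=\left[\begin{smallmatrix} 0 & a'_2\\ v_2(m) & 1\end{smallmatrix}\right]$ for all $m\in M$.
   Context: All rings have an identity $1\neq 0$. Standing assumptions: $R,S,R',S'$ are rings whose only idempotents are $0$ and $1$; $M$ is an $R$-$S$-bimodule, $N$ an $S$-$R$-bimodule, $M'$ an $R'$-$S'$-bimodule, $N'$ an $S'$-$R'$-bimodule; $T=\left[\begin{smallmatrix} R & M\\ N & S\end{smallmatrix}\right]$ and $T'=\left[\begin{smallmatrix} R' & M'\\ N' & S'\end{smallmatrix}\right]$ are the Morita context rings with both Morita maps zero, i.e. the sets of formal matrices with entrywise addition and product $\left[\begin{smallmatrix} r & m\\ n & s\end{smallmatrix}\right]\left[\begin{smallmatrix} r' & m'\\ n' & s'\end{smallmatrix}\right]=\left[\begin{smallmatrix} rr' & rm'+ms'\\ nr'+sn' & ss'\end{smallmatrix}\right]$; and $\phi:T\to T'$ is a ring isomorphism. Under these assumptions every idempotent of $T$ (or $T'$) other than $0$ and $1$ has one of the forms $\left[\begin{smallmatrix}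 1 & m\\ n & 0\end{smallmatrix}\right]$ (called a type 1 idempotent) or $\left[\begin{smallmatrix} 0 & m\\ n & 1\end{smallmatrix}\right]$ (called a type 2 idempotent). *)

From HB Require Import structures.
From mathcomp Require Import all_boot all_algebra.
Set Implicit Arguments. Unset Strict Implicit. Unset Printing Implicit Defensive.
Import GRing.Theory.
Local Open Scope ring_scope.

Definition only_trivial_idem (R : nzRingType) : Prop :=
  forall r : R, r * r = r -> r = 0 \/ r = 1.

Definition is_bimod (R S : nzRingType) (M : zmodType)
  (l : R -> M -> M) (r : M -> S -> M) : Prop :=
  (forall a m1 m2, l a (m1 + m2) = l a m1 + l a m2) /\
  (forall a b m, l (a + b) m = l a m + l b m) /\
  (forall a b m, l (a * b) m = l a (l b m)) /\
  (forall m, l 1 m = m) /\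
  (forall m1 m2 s, r (m1 + m2) s = r m1 s + r m2 s) /\
  (forall m s t, r m (s + t) = r m s + r m t) /\
  (forall m s t, r m (s * t) = r (r m s) t) /\
  (forall m, r m 1 = m) /\
  (forall a m s, r (l a m) s = l a (r m s)).

(* Elements of the Morita context ring [[R, M], [N, S]] (zero Morita maps). *)
Record mctx (R S : nzRingType) (M N : zmodType) := MCtx {
  m11 : R; m12 : M; m21 : N; m22 : S }.

Section MoritaOps.
Variables (R S : nzRingType) (M N : zmodType).
Variables (lM : R -> M -> M) (rM : M -> S -> M).
Variables (lN : S -> N -> N) (rN : N -> R -> N).

Definition mctx_add (x y : mctx R S M N) : mctx R S M N :=
  MCtx (m11 x + m11 y) (m12 x + m12 y) (m21 x + m21 y) (m22 x + m22 y).

(* [[r,m],[n,s]] [[r',m'],[n',s']]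
   = [[r r', r m' + m s'], [n r' + s n', s s']] *)
Definition mctx_mul (x y : mctx R S M N) : mctx R S M N :=
  MCtx (m11 x * m11 y)
       (lM (m11 x) (m12 y) + rM (m12 x) (m22 y))
       (rN (m21 x) (m11 y) + lN (m22 x) (m21 y))
       (m22 x * m22 y).

Definition mctx_one : mctx R S M N := MCtx 1 0 0 1.

Definition mctx_idem (x : mctx R S M N) : Prop := mctx_mul x x = x.

Definition type2_idem (x : mctx R S M N) : Prop :=
  mctx_idem x /\ exists (m : M) (n : N), x = MCtx 0 m n 1.

Definition type1_idem (x : mctx R S M N) : Prop :=
  mctx_idem x /\ exists (m : M) (n : N), x = MCtx 1 m n 0.
End MoritaOps.

Definition mctx_ring_iso
  (R S : nzRingType) (M N : zmodType)
  (lM : R -> M -> M) (rM : M -> S -> M) (lN : S -> N -> N) (rN : N -> R -> N)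
  (R' S' : nzRingType) (M' N' : zmodType)
  (lM' : R' -> M' -> M') (rM' : M' -> S' -> M')
  (lN' : S' -> N' -> N') (rN' : N' -> R' -> N')
  (phi : mctx R S M N -> mctx R' S' M' N') : Prop :=
  bijective phi /\
  (forall x y, phi (mctx_add x y) = mctx_add (phi x) (phi y)) /\
  (forall x y, phi (mctx_mul lM rM lN rN x y)
               = mctx_mul lM' rM' lN' rN' (phi x) (phi y)) /\
  phi (mctx_one R S M N) = mctx_one R' S' M' N'.

From HB Require Import structures.
From mathcomp Require Import all_boot all_algebra.
Local Open Scope ring_scope.
Import GRing.Theory.
Set Implicit Arguments.
Unset Strict Implicit.

(* Write e(m) for the matrix [[1, m], [0, 0]] of the
   Morita context ring T.  These elements satisfy e(m) e(m') = e(m') for all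
   m, m' : M, so they are idempotents generating one and the same principal
   right ideal of T.  A multiplicative map phi transports these relations:
   x := phi(e(m)) and y := phi(e(m1)) satisfy x y = y and y x = x.  In T', if
   y = [[0, a], [n, 1]] is a type 2 idempotent, then the relation y x = x
   forces the (1,1)-entry of x to be 0, after which x y = y forces its
   (1,2)-entry to be a and its (2,2)-entry to be 1.  Hence every phi(e(m))
   is the idempotent [[0, a], [v(m), 1]] with the fixed a and v(m) its
   (2,1)-entry. *)

Section BimoduleFacts.
Variables (R S : nzRingType) (M : zmodType) (l : R -> M -> M) (r : M -> S -> M).
Hypothesis hM : is_bimod l r.

Lemma bimod_l_act0 (a : R) : l a 0 = 0.
Proof.
case: hM => addl _; apply: (@addrI _ (l a 0)).
by rewrite addr0 -addl addr0.
Qed.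

Lemma bimod_l_0act (m : M) : l 0 m = 0.
Proof.
case: hM => _ [addl _]; apply: (@addrI _ (l 0 m)).
by rewrite addr0 -addl addr0.
Qed.

Lemma bimod_r_act0 (m : M) : r m 0 = 0.
Proof.
case: hM => _ [_ [_ [_ [_ [addr _]]]]]; apply: (@addrI _ (r m 0)).
by rewrite addr0 -addr addr0.
Qed.

Lemma bimod_r_0act (s : S) : r 0 s = 0.
Proof.
case: hM => _ [_ [_ [_ [addr _]]]]; apply: (@addrI _ (r 0 s)).
by rewrite addr0 -addr addr0.
Qed.

Lemma bimod_l_1act (m : M) : l 1 m = m.
Proof. by case: hM => _ [_ [_ [unit_l _]]]. Qed.

Lemma bimod_r_1act (m : M) : r m 1 = m.
Proof. by case: hM => _ [_ [_ [_ [_ [_ [_ [unit_r _]]]]]]]. Qed.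

End BimoduleFacts.

Section MoritaContext.
Variables (R S : nzRingType) (M N : zmodType).
Variables (lM : R -> M -> M) (rM : M -> S -> M).
Variables (lN : S -> N -> N) (rN : N -> R -> N).

Local Notation mul := (mctx_mul lM rM lN rN).

Lemma corner_idem_mul (hM : is_bimod lM rM) (hN : is_bimod lN rN) (m m' : M) :
  mul (MCtx 1 m (0 : N) (0 : S)) (MCtx 1 m' 0 0) = MCtx 1 m' 0 0.
Proof.
rewrite /mctx_mul /= mulr1 mulr0 (bimod_l_1act hM) (bimod_r_act0 hM).
by rewrite (bimod_r_0act hN) (bimod_l_act0 hN) !addr0.
Qed.

Lemma same_right_ideal_type2 (hM : is_bimod lM rM) (x : mctx R S M N)
    (a : M) (n : N) :
  mul x (MCtx 0 a n 1) = MCtx 0 a n 1 -> mul (MCtx 0 a n 1) x = x ->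
  x = MCtx 0 a (m21 x) 1.
Proof.
case: x => r b c s; rewrite /mctx_mul /= => [[_ eq12 _ eq22] [eq11 _ _ _]].
rewrite mul0r in eq11; rewrite mulr1 in eq22.
rewrite -eq11 (bimod_l_0act hM) add0r (bimod_r_1act hM) in eq12.
by rewrite -eq11 eq12 eq22.
Qed.

End MoritaContext.

Theorem lemma4p1
  (R S R' S' : nzRingType) (M N M' N' : zmodType)
  (lM : R -> M -> M) (rM : M -> S -> M) (lN : S -> N -> N) (rN : N -> R -> N)
  (lM' : R' -> M' -> M') (rM' : M' -> S' -> M')
  (lN' : S' -> N' -> N') (rN' : N' -> R' -> N')
  (hR : only_trivial_idem R) (hS : only_trivial_idem S)
  (hR' : only_trivial_idem R') (hS' : only_trivial_idem S')
  (hM : is_bimod lM rM) (hN : is_bimod lN rN)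
  (hM' : is_bimod lM' rM') (hN' : is_bimod lN' rN')
  (phi : mctx R S M N -> mctx R' S' M' N')
  (hphi : mctx_ring_iso lM rM lN rN lM' rM' lN' rN' phi)
  (hm1 : exists m1 : M,
     type2_idem lM' rM' lN' rN' (phi (MCtx 1 m1 (0 : N) (0 : S)))) :
  (forall m : M, type2_idem lM' rM' lN' rN' (phi (MCtx 1 m (0 : N) (0 : S)))) /\
  (exists (a2 : M') (v2 : M -> N'),
     forall m : M, phi (MCtx 1 m (0 : N) (0 : S)) = MCtx 0 a2 (v2 m) 1).
Proof.
case: hphi => _ [_ [phi_mul _]].
case: hm1 => m1 [_ [a2 [n2 phi_e1]]].
pose e (m : M) := MCtx (1 : R) m (0 : N) (0 : S).
pose v2 (m : M) := m21 (phi (e m)).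
have phi_e m : phi (e m) = MCtx 0 a2 (v2 m) 1.
  rewrite /v2.
  apply: (same_right_ideal_type2 (lN := lN') (rN := rN') (n := n2) hM');
    by rewrite -phi_e1 -phi_mul corner_idem_mul.
have phi_e_idem m : mctx_idem lM' rM' lN' rN' (phi (e m)).
  by rewrite /mctx_idem -phi_mul corner_idem_mul.
split; last by exists a2, v2.
by move=> m; split; [exact: phi_e_idem | exists a2, (v2 m); exact: phi_e].
Qed.
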